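(* Let $\vec s=(s_1,\dots,s_k)\in\mathbb{Z}_+^k$ and let $\pi_1,\pi_2,\pi_3$ be three $\vec s$-multipermutations. Then there is a pair $i<j$ such that \[ \mathrm{LCS}(\pi_i,\pi_j)\geq\Bigl(\tfrac16\sum_{l=1}^k s_l^2\Bigr)^{1/3}. \] Equivalently, $\mathrm{LCS}_2(3,\mathcal P_{\vec s})\geq\bigl(\tfrac16\sum_{l} s_l^2\bigr)^{1/3}$.
   Context: For $\vec s\in\mathbb{Z}_+^k$, an $\vec s$-multipermutation is a word over $\{1,\dots,k\}$ in which each letter $l$ appears exactly $s_l$ times; $\mathcal P_{\vec s}$ is the set of all of them. $\mathrm{LCS}(w,w')$ is the length of a longest common subsequence of words $w,w'$. $\mathrm{LCS}_2(t,\mathcal P_{\vec s})$ is the minimum, over all sets of $t$ distinct elements of $\mathcal P_{\vec s}$, of the maximum $\mathrm{LCS}$ of two distinct members of the set. *)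

From mathcomp Require Import all_boot.
Set Implicit Arguments. Unset Strict Implicit. Unset Printing Implicit Defensive.

(* Words over the alphabet {1,...,k}, encoded as 'I_k (letter l+1 <-> ordinal l). *)

Definition is_multiperm (k : nat) (s : 'I_k -> nat) (w : seq 'I_k) : bool :=
  [forall l : 'I_k, count_mem l w == s l].

(* LCS w w' : the length of a longest common subsequence of w and w'.
   Subsequences of w are exactly the masks [mask m w]. *)
Definition LCS (T : eqType) (w w' : seq T) : nat :=
  \max_(m : (size w).-tuple bool | subseq (mask m w) w') size (mask m w).

(* Let L be the largest of the three pairwise LCS values.  For a letter x, label
   every triple (a_0, a_1, a_2) of positions of x in the three words by the LCS
   of the prefixes before a_i and a_j, reduced mod L, for each pair i < j.  If two
   equally labelled triples had a_i < a'_i and a_j < a'_j, the matched letters at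
   (a_i, a_j) and (a'_i, a'_j) would make this prefix LCS strictly increase while
   staying below L, contradicting equal residues.  Three coordinates cannot all
   avoid such a comparison, so equally labelled triples agree in a coordinate.
   Hence distinct letters get disjoint label sets, and a label class is covered
   by three slices, each an antichain in the remaining two coordinates, so it has
   at most 6 s_x elements.  Counting the s_x^3 triples gives s_x^2 <= 6 #labels,
   and all labels fit into L^3. *)

From mathcomp Require Import all_boot zify.
Set Implicit Arguments. Unset Strict Implicit. Unset Printing Implicit Defensive.

Section LongestCommonSubsequence.

Variable T : eqType.
Implicit Types (c u v w : seq T) (x : T).

Lemma LCS_ge c u v : subseq c u -> subseq c v -> size c <= LCS u v.
Proof.
move=> /subseqP [m size_m ->] sub_v; have m_tuple : size m == size u by apply/eqP.
exact: (@leq_bigmax_cond _ (fun m : (size u).-tuple bool => subseq (mask m u) v)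
  (fun m => size (mask m u)) (Tuple m_tuple)).
Qed.

Lemma LCS_witness u v : exists c, [/\ subseq c u, subseq c v & size c = LCS u v].
Proof.
rewrite /LCS; set P := (fun m : (size u).-tuple bool => subseq (mask m u) v).
have nil_tuple : size (nseq (size u) false) == size u by rewrite size_nseq.
have sub_nil : subseq (mask (Tuple nil_tuple) u) v by rewrite mask_false sub0seq.
have P_gt0 : 0 < #|P| by apply/card_gt0P; exists (Tuple nil_tuple).
have [m sub_m ->] := eq_bigmax_cond (fun m : (size u).-tuple bool => size (mask m u)) P_gt0.
by exists (mask m u); rewrite mask_subseq.
Qed.

Lemma LCS_subseq_mono u u' v v' : subseq u u' -> subseq v v' -> LCS u v <= LCS u' v'.
Proof.
move=> sub_u sub_v; have [c [c_u c_v <-]] := LCS_witness u v.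
by apply: LCS_ge; [apply: subseq_trans sub_u | apply: subseq_trans sub_v].
Qed.

Lemma LCS_rcons u v x : LCS u v < LCS (rcons u x) (rcons v x).
Proof.
have [c [c_u c_v <-]] := LCS_witness u v.
by rewrite -(size_rcons c x) LCS_ge // -!cats1 cat_subseq.
Qed.

Definition prefix_LCS u v a b := LCS (take a u) (take b v).

Lemma prefix_LCS_size u v : prefix_LCS u v (size u) (size v) = LCS u v.
Proof. by rewrite /prefix_LCS !take_size. Qed.

Lemma prefix_LCS_mono u v a b a' b' :
  a <= a' -> b <= b' -> prefix_LCS u v a b <= prefix_LCS u v a' b'.
Proof.
move=> le_a le_b; apply: LCS_subseq_mono.
  by rewrite -(take_takel u le_a) take_subseq.
by rewrite -(take_takel v le_b) take_subseq.
Qed.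

Lemma prefix_LCS_match u v (a : 'I_(size u)) (b : 'I_(size v)) :
  tnth (in_tuple u) a = tnth (in_tuple v) b ->
  prefix_LCS u v a b < prefix_LCS u v a.+1 b.+1.
Proof.
move=> eq_ab; pose x := tnth (in_tuple u) a; rewrite !(tnth_nth x) /= in eq_ab.
by rewrite /prefix_LCS (take_nth x (ltn_ord a)) (take_nth x (ltn_ord b)) eq_ab LCS_rcons.
Qed.

Lemma prefix_LCS_modn_neq u v L (a a' : 'I_(size u)) (b b' : 'I_(size v)) :
  LCS u v <= L ->
  tnth (in_tuple u) a = tnth (in_tuple v) b ->
  tnth (in_tuple u) a' = tnth (in_tuple v) b' ->
  a < a' -> b < b' -> prefix_LCS u v a b != prefix_LCS u v a' b' %[mod L].
Proof.
move=> le_L match_ab match_ab' lt_a lt_b.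
have lt1 := prefix_LCS_match match_ab; have lt2 := prefix_LCS_match match_ab'.
have le1 := prefix_LCS_mono u v lt_a lt_b.
have le2 := prefix_LCS_mono u v (ltn_ord a') (ltn_ord b'); rewrite prefix_LCS_size in le2.
by rewrite !modn_small ?neq_ltn; lia.
Qed.

End LongestCommonSubsequence.

Section Occurrences.

Variable T : eqType.
Implicit Types (w : seq T) (x : T).

Definition occurrences x w : {set 'I_(size w)} := [set a | tnth (in_tuple w) a == x].

Lemma card_occurrences x w : #|occurrences x w| = count_mem x w.
Proof.
have -> : count_mem x w = count_mem x (map (tnth (in_tuple w)) (enum 'I_(size w))).
  by rewrite map_tnth_enum.
rewrite count_map enumT cardsE cardE /enum_mem size_filter.
by apply: eq_count => a; rewrite !inE.
Qed.

Lemma count_take_mono x w a a' : a <= a' -> count_mem x (take a w) <= count_mem x (take a' w).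
Proof.
by move=> le_a; rewrite -(cat_take_drop a (take a' w)) count_cat take_takel ?leq_addr.
Qed.

Lemma count_take_occurrence x w (a : 'I_(size w)) : a \in occurrences x w ->
  count_mem x (take a.+1 w) = (count_mem x (take a w)).+1.
Proof.
rewrite inE (tnth_nth x) /= => /eqP w_a.
by rewrite (take_nth x (ltn_ord a)) -cats1 count_cat w_a /= eqxx addn1.
Qed.

Lemma count_take_occurrence_lt x w (a : 'I_(size w)) : a \in occurrences x w ->
  count_mem x (take a w) < count_mem x w.
Proof.
move=> occ_a; rewrite -(count_take_occurrence occ_a).
by have := count_take_mono x w (ltn_ord a); rewrite take_size.
Qed.

Lemma count_take_occurrence_ltE x w (a a' : 'I_(size w)) :
  a \in occurrences x w -> a' \in occurrences x w ->
  (count_mem x (take a w) < count_mem x (take a' w)) = (a < a').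
Proof.
move=> occ_a occ_a'; case: (ltnP a a') => [lt_a | le_a'].
  by rewrite -(count_take_occurrence occ_a) count_take_mono.
by apply/negbTE; rewrite -leqNgt count_take_mono.
Qed.

Lemma count_take_occurrence_inj x w :
  {in occurrences x w &, injective (fun a : 'I_(size w) => count_mem x (take a w))}.
Proof.
move=> a a' occ_a occ_a' eq_count; apply/val_inj.
have := count_take_occurrence_ltE occ_a occ_a'; have := count_take_occurrence_ltE occ_a' occ_a.
by rewrite eq_count ltnn; case: ltngtP.
Qed.

End Occurrences.

Lemma card_antichain_le (T : finType) (A : {set T}) (f g : T -> nat) n :
  {in A, forall t, f t < n /\ g t < n} ->
  {in A &, forall t t', f t = f t' -> g t = g t' -> t = t'} ->
  {in A &, forall t t', f t < f t' -> g t < g t' -> False} ->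
  #|A| <= n + n.
Proof.
move=> bounded inj_fg antichain.
(* Two points of A on a common diagonal f - g = const would be comparable. *)
pose diagonal t := f t + (n - g t).
have diagonal_inj : {in A &, injective diagonal}.
  move=> t t' At At' eq_diag; have := bounded t At; have := bounded t' At'.
  rewrite /diagonal in eq_diag.
  case: (ltngtP (f t) (f t')) => [lt_f | lt_f | eq_f] bt' bt.
  - by case: (antichain t t') => //; lia.
  - by case: (antichain t' t) => //; lia.
  - by apply: inj_fg => //; lia.
rewrite cardE -(size_map diagonal) -(size_iota 0 (n + n)) uniq_leq_size //.
  by rewrite map_inj_in_uniq ?enum_uniq // => t t'; rewrite !mem_enum; apply: diagonal_inj.
move=> _ /mapP [t At ->]; rewrite mem_enum in At; have := bounded t At.
by rewrite mem_iota /diagonal; lia.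
Qed.

Lemma card_bigcup_le (I T : finType) (A : I -> {set T}) : #|\bigcup_i A i| <= \sum_i #|A i|.
Proof.
elim/big_ind2: _ => [|m B n C le_B le_C|]; rewrite ?cards0 //.
exact: leq_trans (leq_card_setU B C) (leq_add le_B le_C).
Qed.

Lemma sum_card_le_disjoint (I T : finType) (A : I -> {set T}) :
  (forall i j y, y \in A i -> y \in A j -> i = j) -> \sum_i #|A i| <= #|T|.
Proof.
move=> uniq_A; rewrite -sum1_card.
under eq_bigr do rewrite -sum1_card big_mkcond.
rewrite exchange_big leq_sum // => y _.
have [i yAi | notA] := pickP (fun i => y \in A i); last by rewrite big1 // => i _; rewrite notA.
rewrite (bigD1 i) //= yAi big1 // => j ij; case: ifP => // yAj.
by rewrite (uniq_A _ _ _ yAj yAi) eqxx in ij.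
Qed.

Definition compl_lo (m : 'I_3) : 'I_3 := if m == ord0 then inord 1 else ord0.
Definition compl_hi (m : 'I_3) : 'I_3 := if m == ord_max then inord 1 else ord_max.

Lemma compl_lo_lt_hi m : compl_lo m < compl_hi m.
Proof. by case: m => -[|[|[|//]]] ?; rewrite /compl_lo /compl_hi /= ?inordK. Qed.

Lemma compl_cover m n : [|| n == m, n == compl_lo m | n == compl_hi m].
Proof.
case: m => -[|[|[|//]]] ?; case: n => -[|[|[|//]]] ?;
  by rewrite /compl_lo /compl_hi /= -?val_eqE /= ?inordK.
Qed.

Lemma compl_pair (i j : 'I_3) : i < j -> exists m, compl_lo m = i /\ compl_hi m = j.
Proof.
case: i j => -[|[|[|//]]] ? -[[|[|[|//]]] ?] //= _;
  [exists ord_max | exists (inord 1) | exists ord0];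
  by split; apply: val_inj; rewrite /compl_lo /compl_hi /= -?val_eqE /= ?inordK.
Qed.

Section ThreeWords.

Variables (T : finType) (w : 'I_3 -> seq T) (L : nat).
Hypothesis L_gt0 : 0 < L.
Hypothesis LCS_le : forall i j : 'I_3, i < j -> LCS (w i) (w j) <= L.

Local Notation position := {dffun forall i : 'I_3, 'I_(size (w i))}.

Definition common_occurrences x : {set position} := setXn (fun i => occurrences x (w i)).

Definition pair_LCS (t : position) i j := prefix_LCS (w i) (w j) (t i) (t j).

Definition label (t : position) : {ffun 'I_3 -> 'I_L} :=
  [ffun m => Ordinal (ltn_pmod (pair_LCS t (compl_lo m) (compl_hi m)) L_gt0)].

Lemma common_occurrences_letter x t i :
  t \in common_occurrences x -> tnth (in_tuple (w i)) (t i) = x.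
Proof. by move=> /setXnP /(_ i); rewrite inE => /eqP. Qed.

Lemma card_common_occurrences x :
  #|common_occurrences x| = \prod_i count_mem x (w i).
Proof. by rewrite cardsXn; apply: eq_bigr => i _; rewrite card_occurrences. Qed.

Lemma label_eq_modn t t' (i j : 'I_3) : label t = label t' -> i < j ->
  pair_LCS t i j = pair_LCS t' i j %[mod L].
Proof.
move=> eq_label /compl_pair [m [<- <-]].
by have /(congr1 val) := congr1 (fun f : {ffun 'I_3 -> 'I_L} => f m) eq_label; rewrite !ffunE.
Qed.

Lemma label_eq_not_increasing x x' t t' (i j : 'I_3) :
  t \in common_occurrences x -> t' \in common_occurrences x' -> label t = label t' ->
  i < j -> t i < t' i -> t j < t' j -> False.
Proof.
move=> occ_t occ_t' eq_label lt_ij lt_i lt_j.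
have := prefix_LCS_modn_neq (LCS_le lt_ij) _ _ lt_i lt_j.
rewrite !(common_occurrences_letter _ occ_t) !(common_occurrences_letter _ occ_t').
by rewrite (label_eq_modn eq_label lt_ij) eqxx => /(_ erefl erefl).
Qed.

Lemma label_eq_agree x x' t t' :
  t \in common_occurrences x -> t' \in common_occurrences x' -> label t = label t' ->
  exists i, t i = t' i.
Proof.
move=> occ_t occ_t' eq_label.
have incr := label_eq_not_increasing occ_t occ_t' eq_label.
have decr := label_eq_not_increasing occ_t' occ_t (esym eq_label).
pose i0 : 'I_3 := ord0; pose i1 : 'I_3 := inord 1; pose i2 : 'I_3 := ord_max.
have [e0|n0] := eqVneq (t i0 : nat) (t' i0); first by exists i0; apply: val_inj.
have [e1|n1] := eqVneq (t i1 : nat) (t' i1); first by exists i1; apply: val_inj.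
have [e2|n2] := eqVneq (t i2 : nat) (t' i2); first by exists i2; apply: val_inj.
have lt01 : i0 < i1 by rewrite /= inordK.
have lt02 : i0 < i2 by [].
have lt12 : i1 < i2 by rewrite /= inordK.
(* Of three pairwise distinct coordinates, two move in the same direction. *)
move: (incr _ _ lt01) (incr _ _ lt02) (incr _ _ lt12).
move: (decr _ _ lt01) (decr _ _ lt02) (decr _ _ lt12).
by move: n0 n1 n2; lia.
Qed.

Lemma label_eq_letter x x' t t' :
  t \in common_occurrences x -> t' \in common_occurrences x' -> label t = label t' -> x = x'.
Proof.
move=> occ_t occ_t' eq_label; have [i eq_i] := label_eq_agree occ_t occ_t' eq_label.
by rewrite -(common_occurrences_letter i occ_t) -(common_occurrences_letter i occ_t') eq_i.
Qed.

Section Fiber.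

Variables (x : T) (s : nat) (lab : {ffun 'I_3 -> 'I_L}).
Hypothesis count_w : forall i, count_mem x (w i) = s.

Let fiber := [set t in common_occurrences x | label t == lab].

Lemma fiber_slice_card (t0 : position) i : #|[set t in fiber | t i == t0 i]| <= s + s.
Proof.
set slice := [set t in fiber | t i == t0 i].
have slice_mem t : t \in slice -> [/\ t \in common_occurrences x, label t = lab & t i = t0 i].
  by move=> /setIdP [/setIdP [occ_t /eqP ->] /eqP ->].
pose j := compl_lo i; pose k := compl_hi i.
pose rank (m : 'I_3) (t : position) := count_mem x (take (t m) (w m)).
have occ_m m t : t \in common_occurrences x -> t m \in occurrences x (w m).
  by move=> /setXnP.
apply: (@card_antichain_le _ _ (rank j) (rank k)).
- move=> t /slice_mem [occ_t _ _].
  by split; [rewrite -(count_w j) | rewrite -(count_w k)];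
    apply: count_take_occurrence_lt; apply: occ_m.
- move=> t t' /slice_mem [occ_t _ t_i] /slice_mem [occ_t' _ t'_i] eq_j eq_k.
  have {}eq_j := count_take_occurrence_inj (occ_m j t occ_t) (occ_m j t' occ_t') eq_j.
  have {}eq_k := count_take_occurrence_inj (occ_m k t occ_t) (occ_m k t' occ_t') eq_k.
  apply/ffunP => m; have /or3P [] := compl_cover i m => /eqP -> //.
  by rewrite t_i t'_i.
- move=> t t' /slice_mem [occ_t lab_t _] /slice_mem [occ_t' lab_t' _].
  rewrite /rank !count_take_occurrence_ltE ?occ_m //.
  apply: (label_eq_not_increasing occ_t occ_t' _ (compl_lo_lt_hi i)).
  by rewrite lab_t lab_t'.
Qed.

Lemma card_fiber : #|fiber| <= 6 * s.
Proof.
have [-> | [t0 fiber_t0]] := set_0Vmem fiber; first by rewrite cards0.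
have cover : fiber \subset \bigcup_i [set t in fiber | t i == t0 i].
  apply/subsetP => t fiber_t; apply/bigcupP.
  move: fiber_t fiber_t0 => /setIdP [occ_t /eqP lab_t] /setIdP [occ_t0 /eqP lab_t0].
  have [i eq_i] := label_eq_agree occ_t occ_t0 (etrans lab_t (esym lab_t0)).
  by exists i => //; apply/setIdP; split; [apply/setIdP; split => //; apply/eqP | apply/eqP].
apply: leq_trans (subset_leq_card cover) _; apply: leq_trans (card_bigcup_le _) _.
apply: leq_trans (leq_sum _ (fun i _ => fiber_slice_card t0 i)) _.
by rewrite sum_nat_const card_ord; lia.
Qed.

End Fiber.

Lemma count_sq_le_labels x s : (forall i, count_mem x (w i) = s) ->
  s ^ 2 <= 6 * #|label @: common_occurrences x|.
Proof.
move=> count_w; have [-> // | s_gt0] := posnP s.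
have card_occ : #|common_occurrences x| = s ^ 3.
  by rewrite card_common_occurrences (eq_bigr _ (fun i _ => count_w i)) prod_nat_const card_ord.
have : s ^ 2 * s <= #|label @: common_occurrences x| * (6 * s).
  rewrite -expnSr -card_occ -sum1_card (partition_big_imset label) -sum_nat_const /=.
  by apply: leq_sum => lab _; rewrite sum1dep_card card_fiber.
by rewrite mulnA leq_pmul2r // mulnC.
Qed.

Lemma sum_sq_count_le (s : T -> nat) : (forall x i, count_mem x (w i) = s x) ->
  \sum_x s x ^ 2 <= 6 * L ^ 3.
Proof.
move=> count_w; apply: leq_trans (leq_sum _ (fun x _ => count_sq_le_labels (count_w x))) _.
rewrite -big_distrr leq_pmul2l //.
have labels_disjoint x x' lab :
    lab \in label @: common_occurrences x -> lab \in label @: common_occurrences x' -> x = x'.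
  by move=> /imsetP [t occ_t ->] /imsetP [t' occ_t']; apply: label_eq_letter.
by have := sum_card_le_disjoint labels_disjoint; rewrite card_ffun !card_ord.
Qed.

End ThreeWords.

Theorem theorem11 (k : nat) (s : 'I_k -> nat) (pi : 'I_3 -> seq 'I_k) :
  (forall l, 0 < s l) ->
  (forall i, is_multiperm s (pi i)) ->
  exists i j : 'I_3, i < j /\
    \sum_(l < k) (s l) ^ 2 <= 6 * (LCS (pi i) (pi j)) ^ 3.
Proof.
move=> s_gt0 multiperm_pi.
have count_pi x i : count_mem x (pi i) = s x by move/forallP/(_ x)/eqP: (multiperm_pi i).
pose L := \max_(ij : 'I_3 * 'I_3 | ij.1 < ij.2) LCS (pi ij.1) (pi ij.2).
have LCS_le (i j : 'I_3) : i < j -> LCS (pi i) (pi j) <= L.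
  by move=> lt_ij; apply: (leq_bigmax_cond (i, j)).
have [ij lt_ij L_max] : {ij : 'I_3 * 'I_3 | ij.1 < ij.2 & L = LCS (pi ij.1) (pi ij.2)}.
  by apply: eq_bigmax_cond; apply/card_gt0P; exists (ord0, ord_max).
exists ij.1, ij.2; split => //; rewrite -L_max.
have [L0 | L_gt0] := posnP L; last by apply: (sum_sq_count_le L_gt0 LCS_le).
rewrite big1 // => x _; suff : 0 < L by rewrite L0.
apply: leq_trans (LCS_le ord0 ord_max isT); apply: (@LCS_ge _ [:: x]);
  by rewrite sub1seq -has_pred1 has_count count_pi.
Qed.
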